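(* Let $p$ be a prime, $k \geq 1$, $d = p^k$, and let $\Omega$ be a set with $d$ elements, $S_d = \mathrm{Aut}(\Omega)$. Let $G \subset S_d$ be a primitive solvable subgroup. Then every element $g \in G$ with $g \neq 1_G$ has at most $p^{k-1}$ fixed points on $\Omega$, i.e. $\#\{x \in \Omega : gx = x\} \leq p^{k-1}$.
   Context: A subgroup $G \subset \mathrm{Aut}(\Omega)$ is primitive if it is transitive and the stabilizer $G_x$ of a point $x\in\Omega$ is a maximal subgroup of $G$. *)

From mathcomp Require Import all_boot all_fingroup all_solvable.
Set Implicit Arguments. Unset Strict Implicit. Unset Printing Implicit Defensive.
Local Open Scope group_scope.

Definition primitive_perm_group (T : finType) (G : {group {perm T}}) : Prop :=
  [transitive G, on [set: T] | 'P] /\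
  (exists x : T, maximal 'C_G[x | 'P] G).

From mathcomp Require Import all_boot all_fingroup all_solvable.
Set Implicit Arguments. Unset Strict Implicit. Unset Printing Implicit Defensive.
Local Open Scope group_scope.

(* A solvable primitive group G has a nontrivial abelian normal subgroup N.
   By primitivity N is transitive, and being abelian it is regular, so
   |N| = |Omega| = p^k and N can be identified with Omega via n |-> n x0,
   where x0 is a fixed point of g.  Under this identification the fixed
   points of g are exactly the centralizer C_N(g), a proper subgroup of N
   when g <> 1, hence of order at most p^(k-1). *)

Lemma proper_dvdn_pexp_leq (p k d : nat) :
  prime p -> (d %| p ^ k)%N -> d != (p ^ k)%N -> (d <= p ^ k.-1)%N.
Proof.
move=> pr_p /(dvdn_pfactor _ _ pr_p) [m le_mk ->] ne_mk.
have lt_mk : (m < k)%N by rewrite ltn_neqAle le_mk andbT; apply: contraNneq ne_mk => ->.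
by rewrite leq_pexp2l ?prime_gt0 // -ltnS prednK // (leq_ltn_trans _ lt_mk).
Qed.

Section PermGroupAction.

Variables (T : finType) (N : {group {perm T}}).

Lemma normal_primitive_transitive (G : {group {perm T}}) :
  [primitive G, on [set: T] | 'P] -> N <| G -> N :!=: 1 ->
  [transitive N, on [set: T] | 'P].
Proof.
move=> primG nsNG ntN; case: (prim_trans_norm primG nsNG) => // sNC.
case/negP: ntN; rewrite -subG1; apply: subset_trans (perm_faithful N).
by rewrite subsetI subxx (subset_trans sNC) ?subsetIr.
Qed.

Hypothesis trN : [transitive N, on [set: T] | 'P].

Lemma abelian_transitive_astab1 (x : T) : abelian N -> 'C_N[x | 'P] = 1.
Proof.
move=> cNN; apply/trivgP/subsetP => a /setIP[Na /astab1P ax].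
apply/set1P/permP => y; rewrite perm1.
have [b Nb ->] := atransP2 trN (in_setT x) (in_setT y).
by rewrite /= !apermE -permM -(centsP cNN a Na b Nb) permM; congr (b _); exact: ax.
Qed.

Variable x0 : T.
Hypothesis regN : 'C_N[x0 | 'P] = 1.

Lemma card_transitive_regular : #|N| = #|T|.
Proof.
by rewrite -(card_orbit_stab 'P N x0) regN cards1 muln1 (atransP trN) ?cardsT.
Qed.

Lemma regular_orbit_inj : {in N &, injective (fun n : {perm T} => n x0)}.
Proof.
move=> n m Nn Nm /= e; apply/eqP; rewrite eq_mulgV1 -in_set1.
suff : n * m^-1 \in 'C_N[x0 | 'P] by rewrite regN.
by rewrite inE groupM ?groupV //=; apply/astab1P; rewrite /= apermE permM e -permM mulgV perm1.
Qed.

Lemma fixed_points_regular_normal (g : {perm T}) :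
  g \in 'N(N) -> g x0 = x0 ->
  [set y | g y == y] = (fun n : {perm T} => n x0) @: 'C_N[g].
Proof.
move=> nNg gx0; have gVx0 : g^-1 x0 = x0 by rewrite -{1}gx0 permK.
apply/setP => y; rewrite inE; apply/eqP/imsetP => [gy | [n]].
  have [n Nn ey] := atransP2 trN (in_setT x0) (in_setT y); rewrite /= apermE in ey.
  exists n => //; rewrite inE Nn; apply/cent1P.
  suff ng_n : n ^ g = n by rewrite /commute conjgC ng_n.
  apply: regular_orbit_inj; rewrite ?memJ_norm //=.
  by rewrite conjgE !permM gVx0 -ey gy.
by case/setIP=> _ /cent1P cng ->; rewrite -permM cng permM gx0.
Qed.

Lemma card_fixed_points_regular_normal (g : {perm T}) :
  g \in 'N(N) -> g x0 = x0 -> #|[set y | g y == y]| = #|'C_N[g]|.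
Proof.
move=> nNg gx0; rewrite fixed_points_regular_normal // card_in_imset //.
by apply: sub_in2 regular_orbit_inj; apply/subsetP; rewrite subsetIl.
Qed.

End PermGroupAction.

Lemma card_fixed_points_eq1 (T : finType) (g : {perm T}) :
  #|[set y | g y == y]| = #|T| -> g = 1.
Proof.
move=> eF; apply/permP => y; rewrite perm1.
suff : y \in [set y | g y == y] by rewrite inE => /eqP.
have -> : [set y | g y == y] = [set: T].
  by apply/eqP; rewrite eqEcard subsetT cardsT eF leqnn.
by rewrite inE.
Qed.

Theorem proposition2p2 (p k : nat) (T : finType) (G : {group {perm T}}) :
  prime p -> (1 <= k)%N -> #|T| = (p ^ k)%N ->
  primitive_perm_group G -> solvable G ->
  forall g : {perm T}, g \in G -> g != 1 ->
  (#|[set x : T | g x == x]| <= p ^ k.-1)%N.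
Proof.
move=> pr_p _ cardT [trG [x maxC]] solG g Gg ntg.
have primG : [primitive G, on [set: T] | 'P].
  by rewrite (trans_prim_astab (in_setT x) trG) /maximal_eq maxC orbT.
have ntG : G :!=: 1 by apply/trivgPn; exists g.
have [N [_ nsNG ntN /abelem_abelian cNN]] := solvable_norm_abelem solG (normal_refl G) ntG.
have trN := normal_primitive_transitive primG nsNG ntN.
have [-> | [x0]] := set_0Vmem [set y | g y == y]; first by rewrite cards0.
rewrite inE => /eqP gx0.
have regN := abelian_transitive_astab1 trN x0 cNN.
have nNg : g \in 'N(N) by rewrite (subsetP (normal_norm nsNG)).
rewrite (card_fixed_points_regular_normal trN regN nNg gx0).
apply: proper_dvdn_pexp_leq => //; first by rewrite -cardT -(card_transitive_regular trN regN) cardSg ?subsetIl.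
apply: contra_neq ntg => eC; apply: card_fixed_points_eq1.
by rewrite (card_fixed_points_regular_normal trN regN nNg gx0) eC.
Qed.
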